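(* Let $\{|0\rangle,|1\rangle\}$ be an orthonormal basis of $\mathbb{C}^2$ and $\{|0'\rangle,|1'\rangle,|2'\rangle\}$ an orthonormal basis of $\mathbb{C}^3$. Consider in $\mathbb{C}^2\otimes\mathbb{C}^3$ the three states $$\tfrac{1}{\sqrt2}(|0\rangle|0'\rangle-|1\rangle|1'\rangle),\quad \tfrac{1}{\sqrt2}(|0\rangle|1'\rangle+|1\rangle|0'\rangle),\quad \tfrac{1}{\sqrt2}(|0\rangle|1'\rangle-|1\rangle|0'\rangle)$$ (i.e. the set $\{\tfrac{1}{\sqrt2}(|00'\rangle\pm|11'\rangle),\tfrac{1}{\sqrt2}(|01'\rangle\pm|10'\rangle)\}$ with the state $\tfrac{1}{\sqrt2}(|00'\rangle+|11'\rangle)$ removed). Then the orthogonal complement in $\mathbb{C}^2\otimes\mathbb{C}^3$ of the span of these three states does not contain three pairwise orthogonal maximally entangled states; hence these three states cannot be completed to an orthonormal basis of $\mathbb{C}^2\otimes\mathbb{C}^3$ consisting of maximally entangled states.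
   Context: A pure state of $\mathbb{C}^2\otimes\mathbb{C}^3$ is maximally entangled if it has two equal nonzero Schmidt coefficients, equivalently its reduced state on the qubit is the maximally mixed state $I/2$. *)

(* C^2 (x) C^3 is represented by coefficient matrices
   'M[C]_(2,3): psi i j is the coefficient of |i>|j'>. *)
From HB Require Import structures.
From mathcomp Require Import all_boot all_order all_algebra.
Set Implicit Arguments.
Unset Strict Implicit.
Unset Printing Implicit Defensive.
Import Order.TTheory GRing.Theory Num.Theory.
Local Open Scope ring_scope.

Section QDefs.
Variable C : numClosedFieldType.

Definition vec23 := 'M[C]_(2, 3).

Definition inner (u v : vec23) : C :=
  \sum_(i < 2) \sum_(j < 3) (u i j)^* * v i j.

(* reduced state on the qubit: rho_A = Tr_B |psi><psi| = Psi Psi^dagger *)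
Definition rhoA (psi : vec23) : 'M[C]_2 :=
  psi *m map_mx Num.conj psi^T.

Definition is_state (psi : vec23) : Prop := inner psi psi = 1.

Definition max_entangled (psi : vec23) : Prop :=
  is_state psi /\ rhoA psi = (2%:R)^-1 %:M.

Definition q0 : 'I_2 := @Ordinal 2 0 isT.
Definition q1 : 'I_2 := @Ordinal 2 1 isT.
Definition t0 : 'I_3 := @Ordinal 3 0 isT.
Definition t1 : 'I_3 := @Ordinal 3 1 isT.
Definition ket (i : 'I_2) (j : 'I_3) : vec23 := delta_mx i j.

Definition s2inv : C := (sqrtC 2%:R)^-1.

Definition phi1 : vec23 := s2inv *: (ket q0 t0 - ket q1 t1).
Definition phi2 : vec23 := s2inv *: (ket q0 t1 + ket q1 t0).
Definition phi3 : vec23 := s2inv *: (ket q0 t1 - ket q1 t0).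

Definition in_complement (psi : vec23) : Prop :=
  inner phi1 psi = 0 /\ inner phi2 psi = 0 /\ inner phi3 psi = 0.
End QDefs.

(* The orthogonal complement of the three states is spanned by |00'> + |11'>,
   |02'> and |12'>.  For psi = a (|00'> + |11'>) + b |02'> + c |12'> the reduced
   state is [[|a|^2 + |b|^2, b c^*], [c b^*, |a|^2 + |c|^2]]; it equals I/2 only
   if b c^* = 0 and |b| = |c|, i.e. b = c = 0.  So every maximally entangled
   state of the complement is a nonzero multiple of |00'> + |11'>, and no two of
   them are orthogonal. *)
From HB Require Import structures.
From mathcomp Require Import all_boot all_order all_algebra.
From mathcomp Require Import ring zify.
Import Order.TTheory GRing.Theory Num.Theory.
Local Open Scope ring_scope.

Lemma conjC_orth_eq_norm_eq0 (C : numClosedFieldType) (x y : C) :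
  x * y^* = 0 -> x * x^* = y * y^* -> x = 0 /\ y = 0.
Proof.
move=> /eqP; rewrite mulf_eq0 conjC_eq0 => /orP[] /eqP-> /eqP.
- by rewrite mul0r eq_sym mul_conjC_eq0 => /eqP.
- by rewrite mul0r mul_conjC_eq0 => /eqP.
Qed.

Section ComplementOfThreeBellStates.
Context {C : numClosedFieldType}.

Definition t2 : 'I_3 := @Ordinal 3 2 isT.

(* sqrt 2 times the state removed from the Bell-type basis *)
Definition omega : vec23 C := ket C q0 t0 + ket C q1 t1.

Lemma ord2P (i : 'I_2) : i = q0 \/ i = q1.
Proof. by case: i => [[|[|//]] ?]; [left | right]; apply: val_inj. Qed.

Lemma ord3P (j : 'I_3) : [\/ j = t0, j = t1 | j = t2].
Proof.
by case: j => [[|[|[|//]]] ?]; [apply: Or31 | apply: Or32 | apply: Or33]; apply: val_inj.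
Qed.

Lemma sum_ord2 (F : 'I_2 -> C) : \sum_(i < 2) F i = F q0 + F q1.
Proof. by rewrite !big_ord_recl big_ord0 addr0; congr (F _ + F _); apply: val_inj. Qed.

Lemma sum_ord3 (F : 'I_3 -> C) : \sum_(j < 3) F j = F t0 + F t1 + F t2.
Proof.
by rewrite !big_ord_recl big_ord0 addr0 addrA; congr (F _ + F _ + F _); apply: val_inj.
Qed.

Lemma innerE (u v : vec23 C) :
  inner u v = (u q0 t0)^* * v q0 t0 + (u q0 t1)^* * v q0 t1 + (u q0 t2)^* * v q0 t2
            + ((u q1 t0)^* * v q1 t0 + (u q1 t1)^* * v q1 t1 + (u q1 t2)^* * v q1 t2).
Proof. by rewrite /inner sum_ord2 !sum_ord3. Qed.

Lemma inner_scalel (a : C) (u v : vec23 C) : inner (a *: u) v = a^* * inner u v.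
Proof.
rewrite /inner mulr_sumr; apply: eq_bigr => i _; rewrite mulr_sumr.
by apply: eq_bigr => j _; rewrite mxE rmorphM mulrA.
Qed.

Lemma rhoAE (psi : vec23 C) i k : rhoA psi i k = \sum_(j < 3) psi i j * (psi k j)^*.
Proof. by rewrite /rhoA !mxE; apply: eq_bigr => j _; rewrite !mxE. Qed.

Lemma inner_scale_omega (a b : C) : inner (a *: omega) (b *: omega) = a^* * b *+ 2.
Proof.
by rewrite innerE !mxE /= !(rmorphM, rmorphD, rmorph0, rmorph1) mulr2n; ring.
Qed.

Lemma in_complement_coords (psi : vec23 C) : in_complement psi ->
  [/\ psi q0 t1 = 0, psi q1 t0 = 0 & psi q1 t1 = psi q0 t0].
Proof.
have s2_neq0 : (s2inv C)^* != 0 by rewrite conjC_eq0 invr_eq0 sqrtC_eq0 pnatr_eq0.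
have coordE (phi : vec23 C) x : inner (s2inv C *: phi) psi = 0 -> inner phi psi = x -> x = 0.
  by rewrite inner_scalel => /eqP + <-; rewrite mulf_eq0 (negPf s2_neq0) => /eqP.
case=> /coordE h1 [/coordE h2 /coordE h3].
have /h1 /eqP : inner (ket C q0 t0 - ket C q1 t1) psi = psi q0 t0 - psi q1 t1.
  by rewrite innerE !mxE /= !(rmorphB, rmorph0, rmorph1); ring.
have /h2 : inner (ket C q0 t1 + ket C q1 t0) psi = psi q0 t1 + psi q1 t0.
  by rewrite innerE !mxE /= !(rmorphD, rmorph0, rmorph1); ring.
have /h3 /eqP : inner (ket C q0 t1 - ket C q1 t0) psi = psi q0 t1 - psi q1 t0.
  by rewrite innerE !mxE /= !(rmorphB, rmorph0, rmorph1); ring.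
rewrite !subr_eq0 => /eqP e01 + /eqP e00; rewrite e01 -mulr2n => /eqP.
by rewrite mulrn_eq0 /= => /eqP e10; rewrite e10 e00.
Qed.

Lemma max_entangled_complement {psi : vec23 C} :
  max_entangled psi -> in_complement psi ->
  psi q0 t0 != 0 /\ psi = psi q0 t0 *: omega.
Proof.
move=> [state rho] /in_complement_coords[p01 p10 p11].
have rhoE i k : rhoA psi i k = (2%:R^-1%:M : 'M_2) i k by rewrite rho.
move: (rhoE q0 q0) (rhoE q1 q1) (rhoE q0 q1).
rewrite !rhoAE !sum_ord3 !mxE /= p01 p10 p11 !rmorph0 !mulr0 !mul0r !add0r !addr0.
rewrite mulr1n mulr0n => n0 n1 /conjC_orth_eq_norm_eq0[|p02 p12].
  by apply: (addrI (psi q0 t0 * (psi q0 t0)^*)); rewrite n0 n1.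
have psiE : psi = psi q0 t0 *: omega.
  apply/matrixP => i j; rewrite !mxE.
  by case: (ord2P i) => ->; case: (ord3P j) => ->; rewrite /= ?(p01, p10, p11, p02, p12); ring.
split=> //; apply/eqP => a0; move: state.
by rewrite /is_state psiE inner_scale_omega a0 mulr0 mul0rn => /esym/eqP; rewrite oner_eq0.
Qed.

Lemma max_entangled_complement_inner_neq0 {psi psi' : vec23 C} :
  max_entangled psi -> in_complement psi ->
  max_entangled psi' -> in_complement psi' -> inner psi psi' <> 0.
Proof.
move=> m c m' c'.
have [a0 ->] := max_entangled_complement m c.
have [a0' ->] := max_entangled_complement m' c'.
by apply/eqP; rewrite inner_scale_omega mulrn_eq0 /= mulf_neq0 ?conjC_eq0.
Qed.

End ComplementOfThreeBellStates.

Theorem proposition3 (C : numClosedFieldType) :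
  (~ exists psi1 psi2 psi3 : vec23 C,
       [/\ max_entangled psi1, max_entangled psi2 & max_entangled psi3] /\
       [/\ in_complement psi1, in_complement psi2 & in_complement psi3] /\
       [/\ inner psi1 psi2 = 0, inner psi1 psi3 = 0 & inner psi2 psi3 = 0])
  /\
  (~ exists psi4 psi5 psi6 : vec23 C,
       let b := [:: phi1 C; phi2 C; phi3 C; psi4; psi5; psi6] in
       [/\ max_entangled psi4, max_entangled psi5, max_entangled psi6,
           (forall i j : 'I_6, (i != j) -> inner (nth 0 b i) (nth 0 b j) = 0)
         & (forall i : 'I_6, inner (nth 0 b i) (nth 0 b i) = 1)]).
Proof.
split.
  case=> psi1 [psi2 [psi3 [[m1 m2 _] [[c1 c2 _] [o12 _ _]]]]].
  exact: (max_entangled_complement_inner_neq0 m1 c1 m2 c2 o12).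
case=> psi4 [psi5 [psi6 /= [m4 m5 _ orth _]]].
set b := [:: _; _; _; psi4; psi5; psi6] in orth.
have orthE k l : (k < 6)%N -> (l < 6)%N -> k != l -> inner (nth 0 b k) (nth 0 b l) = 0.
  by move=> k6 l6; apply: (orth (Ordinal k6) (Ordinal l6)).
have complementE k : (2 < k < 6)%N -> in_complement (nth 0 b k).
  move=> /andP[k2 k6].
  by split; [|split]; [apply: (orthE 0) | apply: (orthE 1) | apply: (orthE 2)] => //; lia.
exact: (max_entangled_complement_inner_neq0 m4 (complementE 3 isT) m5 (complementE 4 isT)
          (orthE 3 4 isT isT isT)).
Qed.
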